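(* Let $S$ be a numerical semigroup with $\mathrm{l}(S)=3$. Then $\mathrm{t}(S)\in\{2,3,4\}$. Moreover: (a) $\mathrm{t}(S)=2$ iff $\mathrm{h}(S)-\tfrac{\mathrm{F}(S)}{2}\in S$ iff $\mathrm{PF}(S)=\{\mathrm{F}(S),\mathrm{h}(S)\}$; (b) $\mathrm{t}(S)=3$ iff ($\mathrm{h}(S)-\tfrac{\mathrm{F}(S)}{2}\notin S$ and $2\mathrm{h}(S)-\mathrm{F}(S)\in S$) iff $\mathrm{PF}(S)=\{\mathrm{F}(S),\mathrm{h}(S),\tfrac{\mathrm{F}(S)}{2}\}$; (c) $\mathrm{t}(S)=4$ iff $2\mathrm{h}(S)-\mathrm{F}(S)\notin S$ iff $\mathrm{PF}(S)=\{\mathrm{F}(S),\mathrm{h}(S),\tfrac{\mathrm{F}(S)}{2},\mathrm{F}(S)-\mathrm{h}(S)\}$.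
   Context: A numerical semigroup is a subset $S\subseteq\mathbb{N}$ closed under addition with $0\in S$ and $\mathbb{N}\setminus S$ finite; $\mathrm{F}(S)=\max(\mathbb{Z}\setminus S)$. $\mathrm{N}(S)=\{s\in S\mid s<\mathrm{F}(S)\}$, $\mathrm{L}(S)=\{x\in\mathbb{N}\setminus S\mid \mathrm{F}(S)-x\notin \mathrm{N}(S)\}$, $\mathrm{l}(S)=\#\mathrm{L}(S)$. For $\mathrm{l}(S)\ge2$, $\mathrm{h}(S)=\max\{x\in\mathbb{N}\setminus S\mid \mathrm{F}(S)-x\in\mathbb{N}\setminus S,\ x\ne \mathrm{F}(S)/2\}$. $\mathrm{PF}(S)=\{x\in\mathbb{Z}\setminus S\mid x+s\in S \text{ for all } s\in S\setminus\{0\}\}$ and the type is $\mathrm{t}(S)=\#\mathrm{PF}(S)$. *)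

(* Numerical semigroups are modelled as boolean predicates on nat;
   integer-valued notions (Frobenius number, pseudo-Frobenius numbers) live in int. *)
From HB Require Import structures.
From mathcomp Require Import all_boot all_order all_algebra.
Set Implicit Arguments. Unset Strict Implicit. Unset Printing Implicit Defensive.
Import Order.TTheory GRing.Theory Num.Theory.
Local Open Scope ring_scope.

Definition is_numsg (S : pred nat) : Prop :=
  [/\ S 0%N,
      (forall a b, S a -> S b -> S (a + b)%N) &
      exists N : nat, forall n : nat, (N <= n)%N -> S n].

Definition inS (S : pred nat) (x : int) : bool := (0 <= x) && S `|x|%N.

Definition is_frobenius (S : pred nat) (F : int) : Prop :=
  ~~ inS S F /\ (forall x : int, F < x -> inS S x).

Definition inN (S : pred nat) (F : int) (s : int) : bool := inS S s && (s < F).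

Definition gapN (S : pred nat) (x : int) : bool := (0 <= x) && ~~ inS S x.

Definition inL (S : pred nat) (F : int) (x : int) : Prop :=
  gapN S x /\ ~~ inN S F (F - x).

Definition h_cand (S : pred nat) (F : int) (x : int) : Prop :=
  [/\ gapN S x, gapN S (F - x) & 2 * x != F].
Definition is_h (S : pred nat) (F : int) (h : int) : Prop :=
  h_cand S F h /\ (forall x, h_cand S F x -> x <= h).

Definition inPF (S : pred nat) (x : int) : Prop :=
  ~~ inS S x /\ (forall s : nat, S s -> s <> 0%N -> inS S (x + s%:Z)).

Definition card_is (P : int -> Prop) (n : nat) : Prop :=
  exists l : seq int, [/\ uniq l, (forall x, x \in l <-> P x) & size l = n].

(* For F > 0, L(S) is the set of gaps y with 0 < y < F and F - y a gap ([sym_gap]).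
   It is closed under y |-> F - y, and h is its largest element other than F/2; as
   l(S) = 3, this forces L(S) = {F - h, F/2, h}. Every pseudo-Frobenius number other than F
   lies in L(S), and an element x of L(S) is pseudo-Frobenius iff no larger y in L(S) has
   y - x in S. Checking this on the three elements: h always is, F/2 is iff h - F/2 is not
   in S, and F - h is iff 2h - F = (h - F/2) + (h - F/2) is not in S. *)

From HB Require Import structures.
From mathcomp Require Import all_boot all_order all_algebra.
From mathcomp Require Import zify.
Import Order.TTheory GRing.Theory Num.Theory.
Local Open Scope ring_scope.

Lemma card_is_inj (P : int -> Prop) n m : card_is P n -> card_is P m -> n = m.
Proof.
move=> [l1 [u1 l1P <-]] [l2 [u2 l2P <-]]; apply/perm_size/uniq_perm => // x.
by apply/idP/idP => [/l1P/l2P | /l2P/l1P].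
Qed.

Lemma card_is_leq {P : int -> Prop} {n} s :
  card_is P n -> uniq s -> (forall x, x \in s -> P x) -> (size s <= n)%N.
Proof.
move=> [l [_ lP <-]] us sP; apply: uniq_leq_size => // x /sP Px; exact/lP.
Qed.

Lemma card_is_exists_notin {P : int -> Prop} {n} s :
  card_is P n -> (size s < n)%N -> exists2 x, P x & x \notin s.
Proof.
move=> [l [ul lP <-]] ltsl.
have /hasP [x /lP Px xs] : has (fun x => x \notin s) l.
  apply/negPn/negP; rewrite -all_predC => /allP lsubs.
  have := uniq_leq_size ul (fun x xl => negbNE (lsubs x xl)).
  by rewrite leqNgt ltsl.
by exists x.
Qed.

Section TypeTrichotomy.

Variables (P : int -> Prop) (a c : bool) (u v w z : int).
Hypotheses (uniq_uvwz : uniq [:: u; v; w; z]) (a_c : a -> c).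
Hypothesis PE : forall x, P x <-> [\/ x = u, x = v, (x = w /\ ~~ a) | (x = z /\ ~~ c)].

Let distinct : [/\ u <> v, u <> w & u <> z] /\ [/\ v <> w, v <> z & w <> z].
Proof.
move: uniq_uvwz; rewrite /= !inE.
by case/and4P => /norP [/eqP ? /norP [/eqP ? /eqP ?]] /norP [/eqP ? /eqP ?] /eqP ?.
Qed.

Let Pw : P w <-> ~~ a.
Proof.
have [[_ uw _] [vw _ wz]] := distinct.
split=> [/PE [/esym/uw | /esym/vw | [] // | [/wz]] // | na].
exact/PE/Or43.
Qed.

Let Pz : P z <-> ~~ c.
Proof.
have [[_ _ uz] [_ vz wz]] := distinct.
split=> [/PE [/esym/uz | /esym/vz | [/esym/wz] | [] //] // | nc].
exact/PE/Or44.
Qed.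

Let type2 : a -> (forall x, P x <-> x = u \/ x = v) /\ card_is P 2.
Proof.
move=> aT; have [[uv _ _] _] := distinct.
have D x : P x <-> x = u \/ x = v.
  rewrite PE aT (a_c aT); split=> [[-> | -> | [_ ?] | [_ ?]] | [] ->];
    by [left | right | apply: Or41 | apply: Or42].
split=> //; exists [:: u; v]; split=> // [|x]; first by rewrite /= inE; lia.
by rewrite D !inE; split=> [/orP [] /eqP | [] ->]; rewrite ?eqxx ?orbT; auto.
Qed.

Let type3 : ~~ a -> c -> (forall x, P x <-> [\/ x = u, x = v | x = w]) /\ card_is P 3.
Proof.
move=> aF cT; have [[uv uw _] [vw _ _]] := distinct.
have D x : P x <-> [\/ x = u, x = v | x = w].
  rewrite PE aF cT; split=> [[-> | -> | [-> _] | [_ ?]] | [] ->];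
    by [apply: Or31 | apply: Or32 | apply: Or33 | apply: Or41 | apply: Or42 | apply: Or43].
split=> //; exists [:: u; v; w]; split=> // [|x].
  by rewrite /= !inE; lia.
rewrite D !inE; split=> [/or3P [] /eqP | [] ->]; rewrite ?eqxx ?orbT //;
  by [apply: Or31 | apply: Or32 | apply: Or33].
Qed.

Let type4 : ~~ c ->
  (forall x, P x <-> [\/ x = u, x = v, x = w | x = z]) /\ card_is P 4.
Proof.
move=> cF; have aF := contraNN a_c cF.
have D x : P x <-> [\/ x = u, x = v, x = w | x = z].
  rewrite PE aF cF; split=> [[-> | -> | [-> _] | [-> _]] | [] ->];
    by [apply: Or41 | apply: Or42 | apply: Or43 | apply: Or44].
split=> //; exists [:: u; v; w; z]; split=> // x.
rewrite D !inE; split=> [/or4P [] /eqP | [] ->]; rewrite ?eqxx ?orbT //;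
  by [apply: Or41 | apply: Or42 | apply: Or43 | apply: Or44].
Qed.

Let card_type n : card_is P n -> n = if a then 2%N else if c then 3%N else 4%N.
Proof.
move/card_is_inj => eq_n; case: a a_c type2 type3 type4 => [_ t2 _ _ | _ _ t3 t4].
  exact/eq_n/(t2 isT).2.
by case: c t3 t4 => [t3 _ | _ t4]; [exact/eq_n/(t3 isT isT).2 | exact/eq_n/(t4 isT).2].
Qed.

Lemma type_trichotomy :
  [/\ exists t : nat, card_is P t /\ (t \in [:: 2%N; 3%N; 4%N]),
      (card_is P 2 <-> a) /\ (a <-> (forall x, P x <-> (x = u \/ x = v))),
      (card_is P 3 <-> (~~ a /\ c)) /\
      ((~~ a /\ c) <-> (forall x, P x <-> [\/ x = u, x = v | x = w]))
    & (card_is P 4 <-> ~~ c) /\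
      (~~ c <-> (forall x, P x <-> [\/ x = u, x = v, x = w | x = z]))].
Proof.
have [[_ uw uz] [vw vz wz]] := distinct.
split; [| split; split | split; split | split; split].
- have [aT | aF] := boolP a; first by exists 2%N; split; first exact: (type2 aT).2.
  have [cT | cF] := boolP c; [exists 3%N | exists 4%N]; split=> //.
  + exact: (type3 aF cT).2.
  + exact: (type4 cF).2.
- by move/card_type; case: a c => [] [].
- by move=> aT; apply: (type2 aT).2.
- by move=> aT; apply: (type2 aT).1.
- move=> D2; apply/negPn/negP => /Pw/D2 [] /esym; [exact: uw | exact: vw].
- by move/card_type; case: a c a_c => [] [].
- by case=> aF cT; apply: (type3 aF cT).2.
- by case=> aF cT; apply: (type3 aF cT).1.
- move=> D3; split; first exact/Pw/D3/Or33.
  by apply/negPn/negP => /Pz/D3 [] /esym; [exact: uz | exact: vz | exact: wz].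
- by move/card_type; case: a c a_c => [] [].
- by move=> cF; apply: (type4 cF).2.
- by move=> cF; apply: (type4 cF).1.
- by move=> D4; apply/Pz/D4/Or44.
Qed.

End TypeTrichotomy.

Lemma inS_nat (S : pred nat) (n : nat) : inS S n%:Z = S n.
Proof. by []. Qed.

Definition sym_gap (S : pred nat) (F y : int) : bool :=
  [&& 0 < y, y < F, ~~ inS S y & ~~ inS S (F - y)].

Section NumericalSemigroup.

Context {S : pred nat}.
Hypothesis S0 : S 0%N.
Hypothesis Sadd : forall a b, S a -> S b -> S (a + b)%N.
Context {F : int}.
Hypothesis frobF : is_frobenius S F.

Lemma sym_gapC {y} : sym_gap S F y -> sym_gap S F (F - y).
Proof. by case/and4P=> y0 yF Sy SFy; rewrite /sym_gap subKr Sy SFy andbT; lia. Qed.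

Lemma h_cand_sym_gap {x} : h_cand S F x <-> sym_gap S F x /\ 2 * x != F.
Proof.
rewrite /h_cand /gapN /sym_gap.
split=> [[/andP [x0 Sx] /andP [Fx0 SFx] x2] | [/and4P [x0 xF Sx SFx] x2]].
- have ? : x != 0 by apply: contraNneq Sx => ->.
  have ? : F - x != 0 by apply: contraNneq SFx => ->.
  by rewrite Sx SFx x2 !andbT; lia.
- by rewrite Sx SFx x2 !andbT; split=> //; lia.
Qed.

Lemma inSD {x y} : inS S x -> inS S y -> inS S (x + y).
Proof. by case: x => // m; case: y => // n; apply: Sadd. Qed.

Lemma gap_le_frob {x} : ~~ inS S x -> x <= F.
Proof. by move=> Sx; rewrite leNgt; apply: contra Sx; apply: frobF.2. Qed.

Lemma inPF_addS {x y} : inPF S x -> inS S y -> y != 0 -> inS S (x + y).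
Proof. by case: y => // n [_ PFx] Sn n0; apply: PFx => // n0'; rewrite n0' in n0. Qed.

Lemma inL_sym_gap x : 0 < F -> inL S F x <-> sym_gap S F x.
Proof.
move=> F0; rewrite /inL /gapN /inN /sym_gap.
split=> [[/andP [x0 Sx] NFx] | /and4P [x0 xF Sx SFx]].
- have xF := gap_le_frob Sx.
  have x0' : x != 0 by apply: contraNneq Sx => ->.
  have xF' : x != F by apply: contraNneq NFx => ->; rewrite subrr F0 andbT.
  move: NFx; rewrite negb_and => /orP [SFx | ?]; last lia.
  by rewrite Sx SFx; lia.
- by rewrite Sx negb_and SFx; split=> //; lia.
Qed.

Lemma inPF_frob : inPF S F.
Proof. by split=> [|s _ s0]; [exact: frobF.1 | apply: frobF.2; lia]. Qed.

Lemma inPF_sym_gap {x} : inPF S x -> x != F -> sym_gap S F x.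
Proof.
move=> PFx xF; have [Sx _] := PFx.
have SFx : ~~ inS S (F - x).
  apply: contra (frobF.1) => SFx.
  have := inPF_addS PFx SFx; rewrite subrKC; apply.
  by apply: contraNneq xF; lia.
have := gap_le_frob Sx; have := gap_le_frob SFx.
have ? : x != 0 by apply: contraNneq Sx => ->.
by rewrite /sym_gap Sx SFx !andbT; lia.
Qed.

Lemma sym_gap_inPF {x} : sym_gap S F x ->
  inPF S x <-> (forall y, sym_gap S F y -> x < y -> ~~ inS S (y - x)).
Proof.
move=> /and4P [x0 xF Sx SFx]; split=> [PFx y /and4P [_ _ Sy _] xy | gaps].
  apply: contra Sy => Syx; have := inPF_addS PFx Syx; rewrite subrKC; apply.
  lia.
split=> // s Ss s0.
case: (ltgtP (x + s%:Z) F) => [ltF | gtF | eqF]; last first.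
- by move: SFx; rewrite -eqF [_ - x]addrC addKr inS_nat Ss.
- exact: frobF.2.
- apply/negPn/negP => Sxs.
  have SFxs : ~~ inS S (F - (x + s%:Z)).
    apply: contra SFx => SFxs.
    have -> : F - x = F - (x + s%:Z) + s%:Z by rewrite opprD addrA subrK.
    exact: inSD.
  have sg : sym_gap S F (x + s%:Z) by rewrite /sym_gap Sxs SFxs !andbT; lia.
  have xxs : x < x + s%:Z by lia.
  by move: (gaps _ sg xxs); rewrite [_ - x]addrC addKr inS_nat Ss.
Qed.

Section LengthThree.

Context {h : int}.
Hypothesis hH : is_h S F h.
Hypothesis L3 : card_is (inL S F) 3.

Local Notation k := (F %/ 2)%Z.

Let h_sym_gap : sym_gap S F h /\ 2 * h != F.
Proof. exact/h_cand_sym_gap/hH.1. Qed.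

Lemma frob_gt0 : 0 < F.
Proof. by case: h_sym_gap => /and4P [h0 hF _ _] _; lia. Qed.

Lemma sym_gap_le_h {y} : sym_gap S F y -> 2 * y != F -> y <= h.
Proof. by move=> gy y2; apply: hH.2; apply/h_cand_sym_gap. Qed.

Lemma frob_lt_2h : F < 2 * h.
Proof.
have [gh h2] := h_sym_gap.
have := sym_gap_le_h (sym_gapC gh); lia.
Qed.

Let sym_gap_card : card_is (fun y => sym_gap S F y) 3.
Proof.
have [l [ul lL sl]] := L3; exists l; split=> // y.
by rewrite lL inL_sym_gap // frob_gt0.
Qed.

Lemma sym_gap_off_centre {y} : sym_gap S F y -> 2 * y != F -> y = h \/ y = F - h.
Proof.
move=> gy y2; have [gh _] := h_sym_gap.
have le_y := sym_gap_le_h gy y2.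
have le_Fy : F - y <= h by apply: sym_gap_le_h (sym_gapC gy) _; lia.
case: (eqVneq y h) => [|yh]; first by left.
case: (eqVneq y (F - h)) => [|yFh]; first by right.
(* otherwise {y, F - y} would be a second pair of elements of L(S) besides {h, F - h} *)
have uniq4 : uniq [:: h; F - h; y; F - y].
  by rewrite /= !inE; have := frob_lt_2h; lia.
have sub4 x : x \in [:: h; F - h; y; F - y] -> sym_gap S F x.
  by rewrite !inE => /or4P [] /eqP ->; by [| apply: sym_gapC].
by have := card_is_leq _ sym_gap_card uniq4 sub4.
Qed.

Lemma sym_gap_centre : 2 * k = F /\ sym_gap S F k.
Proof.
have [c gc] := card_is_exists_notin [:: h; F - h] sym_gap_card isT.
rewrite !inE => /norP [/eqP ch /eqP cFh].
have c2 : 2 * c = F.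
  by apply/eqP/negPn/negP => /(sym_gap_off_centre gc) [/ch | /cFh].
by have -> : k = c by lia.
Qed.

Lemma sym_gapE y : sym_gap S F y <-> [\/ y = F - h, y = k | y = h].
Proof.
have [gh _] := h_sym_gap; have [k2 gk] := sym_gap_centre.
split=> [gy | [] ->]; rewrite ?sym_gapC //.
have [y2 | /(sym_gap_off_centre gy) []] := eqVneq (2 * y) F.
- by apply: Or32; lia.
- by move=> ->; apply: Or33.
- by move=> ->; apply: Or31.
Qed.

Let half_between : F - h < k < h.
Proof. by have [k2 _] := sym_gap_centre; have := frob_lt_2h; lia. Qed.

Lemma PF_candidates_uniq : uniq [:: F; h; k; F - h].
Proof.
have [/and4P [_ hF _ _] _] := h_sym_gap; have [Fhk kh] := andP half_between.
by rewrite /= !inE; lia.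
Qed.

Lemma inPF_h : inPF S h.
Proof.
have [gh _] := h_sym_gap; apply/(sym_gap_inPF gh) => y /sym_gapE [] -> hy;
  by have := half_between; lia.
Qed.

Lemma inPF_half : inPF S k <-> ~~ inS S (h - k).
Proof.
have [_ gk] := sym_gap_centre; have [kF kh] := andP half_between.
rewrite (sym_gap_inPF gk); split=> [gaps | Shk y /sym_gapE [] -> ky //].
  by apply: gaps kh; case: h_sym_gap.
all: lia.
Qed.

Lemma inS_2h_subF : inS S (h - k) -> inS S (2 * h - F).
Proof.
have [k2 _] := sym_gap_centre.
move=> Shk; have -> : 2 * h - F = (h - k) + (h - k) by lia.
exact: inSD.
Qed.

Lemma inPF_Fsubh : inPF S (F - h) <-> ~~ inS S (2 * h - F).
Proof.
have [gh _] := h_sym_gap; have [k2 _] := sym_gap_centre.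
rewrite (sym_gap_inPF (sym_gapC gh)); split=> [gaps | S2h y /sym_gapE [] -> hy].
- have -> : 2 * h - F = h - (F - h) by lia.
  by apply: gaps gh _; lia.
- lia.
- have -> : k - (F - h) = h - k by lia.
  exact: contra inS_2h_subF S2h.
- by have -> : h - (F - h) = 2 * h - F by lia.
Qed.

Lemma inPFE x : inPF S x <->
  [\/ x = F, x = h, x = k /\ ~~ inS S (h - k) | x = F - h /\ ~~ inS S (2 * h - F)].
Proof.
split=> [PFx | [-> | -> | [-> /inPF_half] | [-> /inPF_Fsubh]] //].
- have [-> | xF] := eqVneq x F; first exact: Or41.
  have /sym_gapE gx := inPF_sym_gap PFx xF.
  case: gx PFx => ->.
  + by move/inPF_Fsubh => ?; apply: Or44.
  + by move/inPF_half => ?; apply: Or43.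
  + by move=> _; apply: Or42.
- exact: inPF_frob.
- exact: inPF_h.
Qed.

End LengthThree.

End NumericalSemigroup.

Theorem corollary17 (S : pred nat) (F h : int) :
  is_numsg S -> is_frobenius S F -> card_is (inL S F) 3 -> is_h S F h ->
  [/\ exists t : nat, card_is (inPF S) t /\ (t \in [:: 2%N; 3%N; 4%N]),
      (* (a) *)
      (card_is (inPF S) 2 <-> inS S (h - (F %/ 2)%Z)) /\
      (inS S (h - (F %/ 2)%Z) <-> (forall x, inPF S x <-> (x = F \/ x = h))),
      (* (b) *)
      (card_is (inPF S) 3 <-> (~~ inS S (h - (F %/ 2)%Z) /\ inS S (2 * h - F))) /\
      ((~~ inS S (h - (F %/ 2)%Z) /\ inS S (2 * h - F)) <->
         (forall x, inPF S x <-> [\/ x = F, x = h | x = (F %/ 2)%Z]))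
    & (* (c) *)
      (card_is (inPF S) 4 <-> ~~ inS S (2 * h - F)) /\
      (~~ inS S (2 * h - F) <->
         (forall x, inPF S x <-> [\/ x = F, x = h, x = (F %/ 2)%Z | x = F - h]))].
Proof.
move=> [S0 Sadd _] frobF L3 hH.
exact: type_trichotomy (PF_candidates_uniq S0 frobF hH L3)
  (inS_2h_subF S0 Sadd frobF hH L3) (inPFE S0 Sadd frobF hH L3).
Qed.
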